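(* Let $X$ be any one of the sequences $F,L,J,j,P,Q$. For integers $a,b,c,d,e$ put $$\Delta=X_{d-a}X_{e-b}-X_{e-a}X_{d-b},\quad \Delta_1=X_{d-c}X_{e-b}-X_{e-c}X_{d-b},\quad \Delta_2=X_{d-a}X_{e-c}-X_{e-a}X_{d-c}.$$ Then for every nonnegative integer $k$ and every integer $m$: if $\Delta_2\neq0$, $$\sum_{r=0}^k\binom kr\left(\frac{\Delta_1}{\Delta_2}\right)^rX_{m-(b-c)k+(b-a)r}=\left(\frac{\Delta}{\Delta_2}\right)^kX_m\quad\text{and}\quad \sum_{r=0}^k\binom kr\left(\frac{-\Delta}{\Delta_2}\right)^rX_{m+(a-b)k+(b-c)r}=\left(\frac{\Delta_1}{-\Delta_2}\right)^kX_m;$$ and if $\Delta_1\neq0$, $$\sum_{r=0}^k\binom kr\left(\frac{-\Delta}{\Delta_1}\right)^rX_{m+(b-a)k+(a-c)r}=\left(\frac{\Delta_2}{-\Delta_1}\right)^kX_m.$$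
   Context: All sequences are indexed by $n\in\mathbb Z$. Fibonacci numbers $F_n$ and Lucas numbers $L_n$: $F_n=F_{n-1}+F_{n-2}$, $L_n=L_{n-1}+L_{n-2}$ for all $n\in\mathbb Z$, with $F_0=0,F_1=1,L_0=2,L_1=1$ (so $F_{-n}=(-1)^{n-1}F_n$, $L_{-n}=(-1)^nL_n$). Jacobsthal numbers $J_n$ and Jacobsthal–Lucas numbers $j_n$: $J_n=J_{n-1}+2J_{n-2}$, $j_n=j_{n-1}+2j_{n-2}$ for all $n\in\mathbb Z$, with $J_0=0,J_1=1,j_0=2,j_1=1$ (so $J_{-n}=(-1)^{n-1}2^{-n}J_n$, $j_{-n}=(-1)^n2^{-n}j_n$, rational for negative index). Pell numbers $P_n$ and Pell–Lucas numbers $Q_n$: $P_n=2P_{n-1}+P_{n-2}$, $Q_n=2Q_{n-1}+Q_{n-2}$ for all $n\in\mathbb Z$, with $P_0=0,P_1=1,Q_0=2,Q_1=2$ (so $P_{-n}=(-1)^{n-1}P_n$, $Q_{-n}=(-1)^nQ_n$). Here $0^0=1$. *)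

From HB Require Import structures.
From mathcomp Require Import all_boot all_order all_algebra.
Set Implicit Arguments. Unset Strict Implicit. Unset Printing Implicit Defensive.
Import Order.TTheory GRing.Theory Num.Theory.
Local Open Scope ring_scope.

(* Two-sided sequence W with W_n = p W_{n-1} + q W_{n-2} for all n in Z,
   W_0 = w0, W_1 = w1 (q <> 0 for the instances below). *)
Fixpoint fwd (p q w0 w1 : rat) (n : nat) : rat * rat :=
  match n with
  | 0%N => (w0, w1)
  | n'.+1 => let (x, y) := fwd p q w0 w1 n' in (y, p * y + q * x)
  end.
(* bwd n = (W_{-n}, W_{-n+1}) *)
Fixpoint bwd (p q w0 w1 : rat) (n : nat) : rat * rat :=
  match n with
  | 0%N => (w0, w1)
  | n'.+1 => let (x, y) := bwd p q w0 w1 n' in ((y - p * x) / q, x)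
  end.
Definition W (p q w0 w1 : rat) (n : int) : rat :=
  match n with
  | Posz k => (fwd p q w0 w1 k).1
  | Negz k => (bwd p q w0 w1 k.+1).1   (* Negz k = -(k+1) *)
  end.

Definition Fib   : int -> rat := W 1 1 0 1.
Definition Luc   : int -> rat := W 1 1 2 1.
Definition Jac   : int -> rat := W 1 2 0 1.
Definition JacL  : int -> rat := W 1 2 2 1.
Definition Pell  : int -> rat := W 2 1 0 1.
Definition PellL : int -> rat := W 2 1 2 2.

Inductive seqname := sF | sL | sJ | sj | sP | sQ.
Definition Xseq (s : seqname) : int -> rat :=
  match s with
  | sF => Fib | sL => Luc | sJ => Jac | sj => JacL | sP => Pell | sQ => PellL
  end.

(* Every sequence X in the list satisfies X_{n+2} = p X_{n+1} + q X_n with q <> 0,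
   so the shifted sequences n |-> X_{n-t} all lie in a two-dimensional solution
   space. Expanding in a fundamental basis gives the three-term identity
   Delta X_{N-c} = Delta_1 X_{N-a} + Delta_2 X_{N-b}. Dividing by Delta_2 (resp.
   Delta_1) yields a relation A Y_{n+u} = Y_n + B Y_{n+v}, and iterating it k times
   produces the binomial sum by Pascal's rule. *)
From HB Require Import structures.
From mathcomp Require Import all_boot all_order all_algebra.
From mathcomp Require Import zify ring.
Set Implicit Arguments. Unset Strict Implicit. Unset Printing Implicit Defensive.
Import Order.TTheory GRing.Theory Num.Theory.
Local Open Scope ring_scope.

Definition linrec (R : pzRingType) (p q : R) (X : int -> R) :=
  forall n, X (n + 2) = p * X (n + 1) + q * X n.

Section LinearRecurrence.

Variables (R : fieldType) (p q : R).
Hypothesis q_neq0 : q != 0.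

Lemma linrec_eq (Y Z : int -> R) : linrec p q Y -> linrec p q Z ->
  Y 0 = Z 0 -> Y 1 = Z 1 -> Y =1 Z.
Proof.
move=> recY recZ eq0 eq1.
have fwd (k : nat) : Y k = Z k /\ Y k.+1 = Z k.+1.
  elim: k => [|k [IH1 IH2]] //; split=> //.
  have -> : Posz k.+2 = Posz k + 2 by lia.
  have E : Posz k.+1 = Posz k + 1 by lia.
  by rewrite recY recZ -E IH1 IH2.
have bwd (k : nat) : Y (- k%:Z) = Z (- k%:Z) /\ Y (- k%:Z + 1) = Z (- k%:Z + 1).
  elim: k => [|k [IH1 IH2]]; first by rewrite oppr0 add0r.
  split; last by have -> : - Posz k.+1 + 1 = - Posz k by lia.
  have := recY (- Posz k.+1); have := recZ (- Posz k.+1).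
  have -> : - Posz k.+1 + 2 = - Posz k + 1 by lia.
  have -> : - Posz k.+1 + 1 = - Posz k by lia.
  rewrite IH1 IH2 => -> /(addrI _) /(mulfI q_neq0).
  by move->.
by case=> [k|k]; [case: (fwd k) | rewrite NegzE; case: (bwd k.+1)].
Qed.

Variables U V : int -> R.
Hypotheses (recU : linrec p q U) (recV : linrec p q V).
Hypotheses (U0 : U 0 = 1) (U1 : U 1 = 0) (V0 : V 0 = 0) (V1 : V 1 = 1).

Lemma linrec_decomp (X : int -> R) : linrec p q X -> forall t n,
  X (n - t) = X (- t) * U n + X (1 - t) * V n.
Proof.
move=> recX t; apply: linrec_eq => [n|n||].
- have -> : n + 2 - t = n - t + 2 by ring.
  have -> : n + 1 - t = n - t + 1 by ring.
  exact: recX.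
- by rewrite recU recV; ring.
- by rewrite sub0r U0 V0; ring.
- by rewrite U1 V1; ring.
Qed.

Lemma linrec_three_term (X : int -> R) (a b c d e N : int) : linrec p q X ->
  (X (d - a) * X (e - b) - X (e - a) * X (d - b)) * X (N - c) =
  (X (d - c) * X (e - b) - X (e - c) * X (d - b)) * X (N - a) +
  (X (d - a) * X (e - c) - X (e - a) * X (d - c)) * X (N - b).
Proof.
move=> recX.
by rewrite !(linrec_decomp recX _ d) !(linrec_decomp recX _ e)
           !(linrec_decomp recX _ N); ring.
Qed.

End LinearRecurrence.

Lemma pascal_sum (R : comPzRingType) (f : nat -> R) (B : R) k :
  \sum_(r < k.+2) ('C(k.+1, r))%:R * B ^+ r * f r
  = \sum_(r < k.+1) ('C(k, r))%:R * B ^+ r * f r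
  + B * \sum_(r < k.+1) ('C(k, r))%:R * B ^+ r * f r.+1.
Proof.
rewrite big_ord_recl.
under eq_bigr do rewrite /bump /= binS natrD !mulrDl.
rewrite big_split /= addrA big_distrr; congr (_ + _).
  rewrite big_ord_recr [RHS]big_ord_recl /=.
  by rewrite (bin_small (ltnSn k)) mulr0n !mul0r addr0 !bin0.
by apply: eq_bigr => i _; rewrite /bump add1n exprS /=; ring.
Qed.

Lemma binomial_shift_sum (R : comPzRingType) (Y : int -> R) (A B : R) (u v : int) :
  (forall n, A * Y (n + u) = Y n + B * Y (n + v)) ->
  forall k n, \sum_(r < k.+1) ('C(k, r))%:R * B ^+ r * Y (n + v * r%:Z)
             = A ^+ k * Y (n + u * k%:Z).
Proof.
move=> step; elim=> [|k IH] n.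
  by rewrite big_ord_recl big_ord0 /= !mulr0 !addr0 expr0 bin0 !mul1r.
rewrite (@pascal_sum _ (fun r => Y (n + v * r%:Z))).
have shift r : n + v * (r.+1)%:Z = n + v + v * r%:Z by rewrite intS; ring.
under [X in B * X]eq_bigr do rewrite shift.
have -> : n + u * (k.+1)%:Z = n + u * k%:Z + u by rewrite intS; ring.
rewrite !IH.
have -> : n + v + u * k%:Z = n + u * k%:Z + v by ring.
by rewrite exprSr -mulrA step; ring.
Qed.

Lemma binomial_three_term_sum (R : fieldType) (Y : int -> R) (al be ga : R) (u v : int) :
  ga != 0 -> (forall n, al * Y (n + u) = be * Y (n + v) + ga * Y n) ->
  forall k n, \sum_(r < k.+1) ('C(k, r))%:R * (be / ga) ^+ r * Y (n + v * r%:Z)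
             = (al / ga) ^+ k * Y (n + u * k%:Z).
Proof.
move=> ga_neq0 rel; apply: binomial_shift_sum => n.
rewrite mulrAC rel mulrDl [ga * _]mulrC mulfK // addrC.
by rewrite mulrAC.
Qed.

Lemma fwd_S p q w0 w1 n :
  fwd p q w0 w1 n.+1 = ((fwd p q w0 w1 n).2,
                        p * (fwd p q w0 w1 n).2 + q * (fwd p q w0 w1 n).1).
Proof. by rewrite /=; case: (fwd p q w0 w1 n). Qed.

Lemma bwd_S p q w0 w1 n :
  bwd p q w0 w1 n.+1 = (((bwd p q w0 w1 n).2 - p * (bwd p q w0 w1 n).1) / q,
                        (bwd p q w0 w1 n).1).
Proof. by rewrite /=; case: (bwd p q w0 w1 n). Qed.

Lemma W_oppz p q w0 w1 (n : nat) : W p q w0 w1 (- n%:Z) = (bwd p q w0 w1 n).1.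
Proof. by case: n => [|n]; rewrite ?oppr0 // -NegzE. Qed.

Lemma W_linrec p q w0 w1 : q != 0 -> linrec p q (W p q w0 w1).
Proof.
move=> q_neq0 [k|k].
- have -> : Posz k + 2 = Posz k.+2 by lia.
  have -> : Posz k + 1 = Posz k.+1 by lia.
  by rewrite /W !fwd_S.
- rewrite NegzE; case: k => [|j].
  + have -> : - (Posz 1) + 2 = Posz 1 by lia.
    have -> : - (Posz 1) + 1 = Posz 0 by lia.
    by rewrite (W_oppz _ _ _ _ 1) /=; field.
  + have -> : - (Posz j.+2) + 2 = - Posz j by lia.
    have -> : - (Posz j.+2) + 1 = - Posz j.+1 by lia.
    by rewrite !W_oppz [bwd _ _ _ _ j.+2]bwd_S bwd_S /=; field.
Qed.

Lemma Xseq_W (s : seqname) :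
  exists p q w0 w1, q != 0 /\ Xseq s = W p q w0 w1.
Proof.
by case: s; [exists 1, 1, 0, 1 | exists 1, 1, 2, 1 | exists 1, 2, 0, 1
            | exists 1, 2, 2, 1 | exists 2, 1, 0, 1 | exists 2, 1, 2, 2].
Qed.

Theorem theorem6 (s : seqname) (a b c d e : int) (k : nat) (m : int) :
  let X := Xseq s in
  let D  := X (d - a) * X (e - b) - X (e - a) * X (d - b) in
  let D1 := X (d - c) * X (e - b) - X (e - c) * X (d - b) in
  let D2 := X (d - a) * X (e - c) - X (e - a) * X (d - c) in
  (D2 != 0 ->
     (\sum_(r < k.+1) ('C(k, r))%:R * (D1 / D2) ^+ r
          * X (m - (b - c) * k%:Z + (b - a) * r%:Z)
        = (D / D2) ^+ k * X m)
  /\ (\sum_(r < k.+1) ('C(k, r))%:R * (- D / D2) ^+ r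
          * X (m + (a - b) * k%:Z + (b - c) * r%:Z)
        = (D1 / (- D2)) ^+ k * X m))
  /\
  (D1 != 0 ->
     \sum_(r < k.+1) ('C(k, r))%:R * (- D / D1) ^+ r
          * X (m + (b - a) * k%:Z + (a - c) * r%:Z)
        = (D2 / (- D1)) ^+ k * X m).
Proof.
move=> X D D1 D2.
have three N : D * X (N - c) = D1 * X (N - a) + D2 * X (N - b).
  rewrite /D /D1 /D2 /X; have [p [q [w0 [w1 [q_neq0 ->]]]]] := Xseq_W s.
  apply: (linrec_three_term q_neq0 (@W_linrec p q 1 0 q_neq0)
    (@W_linrec p q 0 1 q_neq0)) => //; exact: W_linrec.
have rel_b n : D * X (n + (b - c)) = D1 * X (n + (b - a)) + D2 * X n.
  by move: (three (n + b)); rewrite addrK !addrA.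
have rel_a n : D * X (n + (a - c)) = D2 * X (n + (a - b)) + D1 * X n.
  by move: (three (n + a)); rewrite addrK [_ + D2 * _]addrC !addrA.
have rel_b' n : D1 * X (n + (b - a)) = D * X (n + (b - c)) + (- D2) * X n.
  by rewrite rel_b mulNr addrK.
have rel_a' n : D2 * X (n + (a - b)) = D * X (n + (a - c)) + (- D1) * X n.
  by rewrite rel_a mulNr addrK.
split; [move=> D2_neq0; split | move=> D1_neq0].
- rewrite (binomial_three_term_sum D2_neq0 rel_b).
  by congr (_ * X _); ring.
- rewrite mulNr -divrN (binomial_three_term_sum _ rel_b') ?oppr_eq0 //.
  by congr (_ * X _); ring.
- rewrite mulNr -divrN (binomial_three_term_sum _ rel_a') ?oppr_eq0 //.
  by congr (_ * X _); ring.
Qed.
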